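(* There exists an NMFDP whose fairness objective requires unbounded memory. Specifically, there is an NMFDP with fairness function $F$ for which there do not exist all of the following: a finite set $M$ of memory states; an initial memory $m_{\text{init}}\in M$; a memory update function $g:M\times A\times S\to M$; and a function $F':S\times M\to\mathbb{R}$, such that $F(\tau_{1,t})=F'(s_{t+1},m_{t+1})$ for every bounded trace $\tau_{1,t}$ and every $t$. Here $m_1=m_{\text{init}}$ and $m_{k+1}=g(m_k,a_k,s_{k+1})$. An example is the two-stakeholder doughnut process with $S=\{s_{\text{init}}\}$, $A=\{toX,toY\}$ and $$F(\tau_{1,T})=\Big|\sum_{t=1}^T\mathbb{I}(a_t=toX)-\sum_{t=1}^T\mathbb{I}(a_t=toY)\Big|.$$
   Context: An NMFDP is a tuple $\langle S,s_{\text{init}},A,P,R_1,\dots,R_n,\gamma,F\rangle$ with the following components: a finite state set $S$; an initial state $s_{\text{init}}$; a finite action set $A$; a transition distribution $P$; Markovian stakeholder rewards $R_i:S\times A\times S\to\mathbb{R}$; a discount factor $\gamma\in(0,1]$; and a non-Markovian fairness function $F:(S\times A)^+\times S\to\mathbb{R}$ evaluated on bounded traces $\tau_{1,t}=s_1,a_1,\dots,s_t,a_t,s_{t+1}$ with $s_1=s_{\text{init}}$. In the example, $toX$ and $toY$ are the actions that allocate one doughnut to stakeholder $X$ and to stakeholder $Y$ respectively. *)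

From HB Require Import structures.
From mathcomp Require Import all_boot all_order all_algebra.
From mathcomp Require Import reals.
Set Implicit Arguments. Unset Strict Implicit. Unset Printing Implicit Defensive.
Import Order.TTheory GRing.Theory Num.Theory.
Local Open Scope ring_scope.

(* A bounded trace tau_{1,t} = s_1,a_1,...,s_t,a_t,s_{t+1} is represented as
   the nonempty list [:: (s_1,a_1); ...; (s_t,a_t)] together with s_{t+1};
   F : (S x A)^+ x S -> R is given on such pairs (its value on the empty
   list is irrelevant). *)
Record NMFDP (R : realType) := {
  nm_S : finType;
  nm_sinit : nm_S;
  nm_A : finType;
  nm_P : nm_S -> nm_A -> {ffun nm_S -> R};
  nm_P_ge0 : forall s a s', 0 <= nm_P s a s';
  nm_P_sum1 : forall s a, \sum_(s' : nm_S) nm_P s a s' = 1;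
  nm_n : nat;
  nm_Rew : 'I_nm_n -> nm_S -> nm_A -> nm_S -> R;
  nm_gamma : R;
  nm_gamma_gt0 : 0 < nm_gamma;
  nm_gamma_le1 : nm_gamma <= 1;
  nm_F : seq (nm_S * nm_A) -> nm_S -> R
}.
Arguments nm_S {R} n.
Arguments nm_sinit {R} n.
Arguments nm_A {R} n.
Arguments nm_P {R} n.
Arguments nm_n {R} n.
Arguments nm_Rew {R} n.
Arguments nm_gamma {R} n.
Arguments nm_F {R} n.

(* Memory run: given the trace prefix [:: (s_1,a_1); ...; (s_t,a_t)] and the
   final state s_{t+1}, starting from m_1 = m, computes m_{t+1} where
   m_{k+1} = g m_k a_k s_{k+1}. *)
Fixpoint mem_run (S A M : Type) (g : M -> A -> S -> M) (m : M)
    (p : seq (S * A)) (slast : S) : M :=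
  match p with
  | [::] => m
  | (s, a) :: p' => mem_run g (g m a (head slast (map fst p'))) p' slast
  end.

Definition finite_memory_representable (R : realType) (N : NMFDP R) : Prop :=
  exists (M : finType) (minit : M) (g : M -> nm_A N -> nm_S N -> M)
         (F' : nm_S N -> M -> R),
    forall (a1 : nm_A N) (p : seq (nm_S N * nm_A N)) (slast : nm_S N),
      nm_F N ((nm_sinit N, a1) :: p) slast
      = F' slast (mem_run g minit ((nm_sinit N, a1) :: p) slast).

From mathcomp Require Import all_boot all_order all_algebra.
From mathcomp Require Import reals.
Import Order.TTheory GRing.Theory Num.Theory.
Local Open Scope ring_scope.

(* The memory reached after a trace prefix is updated once more with the next
   state, so a prefix is summarised by a function "next state |-> memory", an
   element of the finite type {ffun S -> M}.  By pigeonhole two prefixes toX^i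
   and toX^j with i <> j get the same summary, and then every continuation
   yields the same fairness value after both.  The continuation toY^i balances
   the first trace (fairness 0) but not the second (fairness |j - i|). *)

Lemma mem_run_cat (S A M : Type) (g : M -> A -> S -> M) (m : M)
    (p r : seq (S * A)) (s : S) :
  mem_run g m (p ++ r) s = mem_run g (mem_run g m p (head s (map fst r))) r s.
Proof.
elim: p m => [|[s1 a1] p IH] m //=.
by rewrite IH map_cat; case: p {IH}.
Qed.

Lemma representable_indistinguishable_prefixes (R : realType) (N : NMFDP R)
    (a1 : nm_A N) (p : nat -> seq (nm_S N * nm_A N)) :
  finite_memory_representable N ->
  exists i j, i != j /\ forall r s,
    nm_F N ((nm_sinit N, a1) :: p i ++ r) s
    = nm_F N ((nm_sinit N, a1) :: p j ++ r) s.
Proof.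
move=> [M [minit [g [F' repF]]]].
pose lookahead_memory (i : 'I_#|{ffun nm_S N -> M}|.+1) :=
  [ffun s' => mem_run g minit ((nm_sinit N, a1) :: p i) s'].
have /injectivePn [i [j neq_ij same_mem]] : ~~ injectiveb lookahead_memory.
  by apply/injectiveP => /leq_card; rewrite card_ord ltnn.
exists (val i), (val j); split=> // r s.
have /ffunP/(_ (head s (map fst r))) := same_mem.
by rewrite !ffunE !repF -!cat_cons !mem_run_cat => ->.
Qed.

Section Doughnut.
Variable R : realType.

Local Notation toX := true.
Local Notation toY := false.

Definition doughnut_P (s : unit) (a : bool) : {ffun unit -> R} := [ffun => 1].

Lemma doughnut_P_ge0 s a s' : 0 <= doughnut_P s a s'.
Proof. by rewrite ffunE. Qed.

Lemma doughnut_P_sum1 s a : \sum_(s' : unit) doughnut_P s a s' = 1.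
Proof. by rewrite (big_pred1 tt) ?ffunE // => -[]. Qed.

(* Stakeholder [ord0] is X. *)
Definition doughnut_reward (i : 'I_2) (s : unit) (a : bool) (s' : unit) : R :=
  ((i == ord0) == a)%:R.

Definition doughnut_F (p : seq (unit * bool)) (s : unit) : R :=
  `|(count_mem toX (map snd p))%:R - (count_mem toY (map snd p))%:R|.

Definition doughnut : NMFDP R :=
  @Build_NMFDP R unit tt bool doughnut_P doughnut_P_ge0 doughnut_P_sum1
    2 doughnut_reward 1 ltr01 (lexx 1) doughnut_F.

Lemma doughnut_F_blocks (m n : nat) (s : unit) :
  doughnut_F (nseq m (tt, toX) ++ nseq n (tt, toY)) s = `|m%:R - n%:R|.
Proof.
by rewrite /doughnut_F map_cat !map_nseq !count_cat !count_nseq /= mul1n mul0n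
  addn0 add0n mul1n.
Qed.

End Doughnut.

Theorem corollary1 (R : realType) :
  exists N : NMFDP R, ~ finite_memory_representable N.
Proof.
exists (doughnut R).
move=> /(@representable_indistinguishable_prefixes R (doughnut R) true
  (fun i => nseq i (tt, true))) [i [j [neq_ij same_F]]].
have := same_F (nseq i.+1 (tt, false)) tt.
rewrite /= (doughnut_F_blocks _ i.+1 i.+1) (doughnut_F_blocks _ j.+1 i.+1).
rewrite subrr normr0 => /esym/eqP.
by rewrite normr_eq0 subr_eq0 eqr_nat eqSS eq_sym (negbTE neq_ij).
Qed.
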